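(* Let $\alpha>0$, $0<\beta_1<1$, $0<\beta_2<1$, $\epsilon>0$, $\lambda>0$, and $w_0\in\mathbb{R}$. Define the Adam iterates for the gradient $g(w)=\lambda w$ by $m_0=0$, $v_0=0$ and, for $t\ge1$, $$g_t=\lambda w_{t-1},\quad m_t=\beta_1 m_{t-1}+(1-\beta_1)g_t,\quad v_t=\beta_2 v_{t-1}+(1-\beta_2)g_t^2,\quad w_t=w_{t-1}-\alpha\,\frac{m_t/(1-\beta_1^t)}{\sqrt{v_t/(1-\beta_2^t)+\epsilon}}.$$ If $w_t$ converges to some $w_*\in\mathbb{R}$ as $t\to\infty$, then $w_*=0$.
   Context: This models a single scalar weight $w_t$ of a network under $L_2$ regularization with parameter $\lambda$, trained with the Adam optimizer, in the situation where the loss gradient vanishes (the connected ReLU unit is never activated), so that the gradient equals $\lambda$ times the current weight. *)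

From Stdlib Require Import Reals.
Open Scope R_scope.

Fixpoint adam_state (alpha b1 b2 eps lam w0 : R) (t : nat) : R * R * R :=
  match t with
  | O => (0, 0, w0)
  | S k =>
      let '(m, v, w) := adam_state alpha b1 b2 eps lam w0 k in
      let g := lam * w in
      let m' := b1 * m + (1 - b1) * g in
      let v' := b2 * v + (1 - b2) * g ^ 2 in
      let w' := w - alpha * (m' / (1 - b1 ^ (S k)))
                      / sqrt (v' / (1 - b2 ^ (S k)) + eps) in
      (m', v', w')
  end.

Definition adam_w (alpha b1 b2 eps lam w0 : R) (t : nat) : R :=
  snd (adam_state alpha b1 b2 eps lam w0 t).

(** Convergence of [w_t] forces [w_t - w_(t-1) -> 0].  Along a convergent,
    hence bounded, trajectory the second moment [v_t] stays bounded, so the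
    Adam denominator is bounded and the update equation gives
    [|m_t| <= C |w_t - w_(t-1)| -> 0].  The first-moment recursion
    [(1 - b1) lam w_(t-1) = m_t - b1 m_(t-1)] then yields [lam w_* = 0]. *)

From Stdlib Require Import Reals Lra Lia.
Open Scope R_scope.

Lemma Un_cv_scal (u : nat -> R) (c l : R) :
  Un_cv u l -> Un_cv (fun n => c * u n) (c * l).
Proof.
  intros Hu. apply CV_mult; [|exact Hu].
  intros e He. exists 0%nat. intros n _. rewrite R_dist_eq. exact He.
Qed.

Lemma Un_cv_ext (u v : nat -> R) (l : R) :
  (forall n, u n = v n) -> Un_cv u l -> Un_cv v l.
Proof.
  intros Huv Hu e He. destruct (Hu e He) as [N HN].
  exists N. intros n Hn. rewrite <- Huv. exact (HN n Hn).
Qed.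

Lemma Un_cv_succ_iff (u : nat -> R) (l : R) :
  Un_cv u l <-> Un_cv (fun n => u (S n)) l.
Proof.
  split; intros Hu e He; destruct (Hu e He) as [N HN].
  - exists N. intros n Hn. apply HN. lia.
  - exists (S N). intros [|n] Hn; [lia|]. apply HN. lia.
Qed.

Lemma Un_cv_succ_sub (u : nat -> R) (l : R) :
  Un_cv u l -> Un_cv (fun n => u (S n) - u n) 0.
Proof.
  intros Hu. rewrite <- (Rminus_diag l).
  apply CV_minus; [apply (Un_cv_succ_iff u l)|]; exact Hu.
Qed.

Lemma Un_cv_0_dominated (u v : nat -> R) :
  (forall n, Rabs (u n) <= v n) -> Un_cv v 0 -> Un_cv u 0.
Proof.
  intros Huv Hv e He. destruct (Hv e He) as [N HN]. exists N. intros n Hn.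
  specialize (HN n Hn). specialize (Huv n). unfold R_dist in *.
  rewrite Rminus_0_r in *. pose proof (Rle_abs (v n)). lra.
Qed.

Lemma one_sub_pow_succ_bounds (b : R) (k : nat) :
  0 < b < 1 -> 1 - b <= 1 - b ^ S k <= 1.
Proof.
  intros Hb. pose proof (pow_lt b k (proj1 Hb)).
  assert (b ^ k <= 1) by (rewrite <- (pow1 k); apply pow_incr; lra).
  simpl. split; nra.
Qed.

Section AdamOnQuadratic.

Variables alpha b1 b2 eps lam w0 : R.
Hypothesis alpha_gt0 : 0 < alpha.
Hypothesis b1_in01 : 0 < b1 < 1.
Hypothesis b2_in01 : 0 < b2 < 1.
Hypothesis eps_gt0 : 0 < eps.

Let w := adam_w alpha b1 b2 eps lam w0.

Definition adam_m (t : nat) : R := fst (fst (adam_state alpha b1 b2 eps lam w0 t)).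
Definition adam_v (t : nat) : R := snd (fst (adam_state alpha b1 b2 eps lam w0 t)).

Definition adam_denom (t : nat) : R := sqrt (adam_v t / (1 - b2 ^ t) + eps).

Lemma adam_stateS (k : nat) :
  adam_state alpha b1 b2 eps lam w0 (S k) =
  (b1 * adam_m k + (1 - b1) * (lam * w k),
   b2 * adam_v k + (1 - b2) * (lam * w k) ^ 2,
   w k - alpha * ((b1 * adam_m k + (1 - b1) * (lam * w k)) / (1 - b1 ^ S k))
         / sqrt ((b2 * adam_v k + (1 - b2) * (lam * w k) ^ 2) / (1 - b2 ^ S k) + eps)).
Proof.
  unfold w, adam_w, adam_m, adam_v. simpl adam_state.
  destruct (adam_state alpha b1 b2 eps lam w0 k) as [[m v] w']. reflexivity.
Qed.

Lemma adam_mS (k : nat) : adam_m (S k) = b1 * adam_m k + (1 - b1) * (lam * w k).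
Proof. unfold adam_m at 1. rewrite adam_stateS. reflexivity. Qed.

Lemma adam_vS (k : nat) : adam_v (S k) = b2 * adam_v k + (1 - b2) * (lam * w k) ^ 2.
Proof. unfold adam_v at 1. rewrite adam_stateS. reflexivity. Qed.

Lemma adam_wS (k : nat) :
  w (S k) = w k - alpha * (adam_m (S k) / (1 - b1 ^ S k)) / adam_denom (S k).
Proof.
  unfold adam_denom. rewrite adam_mS, adam_vS.
  unfold w at 1, adam_w. rewrite adam_stateS. reflexivity.
Qed.

Lemma adam_v_ge0 (t : nat) : 0 <= adam_v t.
Proof.
  induction t as [|t IH]; [unfold adam_v; simpl; lra|].
  rewrite adam_vS. pose proof (pow2_ge_0 (lam * w t)). nra.
Qed.

Lemma adam_v_le (B : R) :
  (forall t, Rabs (w t) <= B) -> forall t, adam_v t <= (lam * B) ^ 2.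
Proof.
  intros HB t. induction t as [|t IH]; [unfold adam_v; simpl; apply pow2_ge_0|].
  assert (Hg : (lam * w t) ^ 2 <= (lam * B) ^ 2).
  { rewrite !Rpow_mult_distr. apply Rmult_le_compat_l; [apply pow2_ge_0|].
    apply pow_maj_Rabs. apply HB. }
  rewrite adam_vS. nra.
Qed.

Lemma adam_denomS_gt0 (k : nat) : 0 < adam_denom (S k).
Proof.
  apply sqrt_lt_R0. pose proof (one_sub_pow_succ_bounds b2 k b2_in01).
  pose proof (adam_v_ge0 (S k)).
  assert (0 <= adam_v (S k) / (1 - b2 ^ S k)) by (apply Rle_mult_inv_pos; lra).
  lra.
Qed.

Lemma adam_denomS_le (B : R) :
  (forall t, Rabs (w t) <= B) ->
  forall k, adam_denom (S k) <= sqrt ((lam * B) ^ 2 / (1 - b2) + eps).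
Proof.
  intros HB k. apply sqrt_le_1_alt, Rplus_le_compat_r.
  pose proof (one_sub_pow_succ_bounds b2 k b2_in01).
  apply Rle_trans with ((lam * B) ^ 2 / (1 - b2 ^ S k)).
  - apply Rmult_le_compat_r; [apply Rlt_le, Rinv_0_lt_compat; lra|].
    exact (adam_v_le B HB (S k)).
  - apply Rmult_le_compat_l; [apply pow2_ge_0|]. apply Rinv_le_contravar; lra.
Qed.

Lemma adam_mS_increment (k : nat) :
  adam_m (S k) = - (w (S k) - w k) * adam_denom (S k) * (1 - b1 ^ S k) / alpha.
Proof.
  pose proof (adam_denomS_gt0 k). pose proof (one_sub_pow_succ_bounds b1 k b1_in01).
  rewrite adam_wS. field. repeat split; lra.
Qed.

Lemma Rabs_adam_mS_le (B : R) :
  (forall t, Rabs (w t) <= B) ->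
  forall k, Rabs (adam_m (S k)) <=
    sqrt ((lam * B) ^ 2 / (1 - b2) + eps) / alpha * Rabs (w (S k) - w k).
Proof.
  intros HB k.
  pose proof (adam_denomS_gt0 k). pose proof (adam_denomS_le B HB k).
  pose proof (one_sub_pow_succ_bounds b1 k b1_in01).
  pose proof (Rinv_0_lt_compat alpha alpha_gt0).
  set (Dmax := sqrt _) in *.
  assert (Hdc : adam_denom (S k) * (1 - b1 ^ S k) <= Dmax) by nra.
  rewrite adam_mS_increment. unfold Rdiv.
  rewrite !Rabs_mult, Rabs_Ropp, (Rabs_pos_eq (adam_denom _)),
    (Rabs_pos_eq (1 - _)), (Rabs_pos_eq (/ alpha)) by lra.
  replace (Dmax * / alpha * Rabs (w (S k) - w k))
    with (Dmax * (/ alpha * Rabs (w (S k) - w k))) by ring.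
  replace (Rabs (w (S k) - w k) * adam_denom (S k) * (1 - b1 ^ S k) * / alpha)
    with (adam_denom (S k) * (1 - b1 ^ S k) * (/ alpha * Rabs (w (S k) - w k))) by ring.
  apply Rmult_le_compat_r; [|exact Hdc].
  apply Rmult_le_pos; [lra|apply Rabs_pos].
Qed.

Lemma adam_m_cv0 (wstar : R) : Un_cv w wstar -> Un_cv adam_m 0.
Proof.
  intros Hw. destruct (maj_by_pos w (exist _ wstar Hw)) as [B [_ HB]].
  apply Un_cv_succ_iff.
  apply (Un_cv_0_dominated _ _ (Rabs_adam_mS_le B HB)).
  rewrite <- (Rmult_0_r (sqrt ((lam * B) ^ 2 / (1 - b2) + eps) / alpha)).
  apply Un_cv_scal. rewrite <- Rabs_R0. apply cv_cvabs.
  exact (Un_cv_succ_sub w wstar Hw).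
Qed.

Lemma adam_grad_cv0 : Un_cv adam_m 0 -> Un_cv (fun k => lam * w k) 0.
Proof.
  intros Hm.
  assert (Hgrad : forall k, / (1 - b1) * (adam_m (S k) - b1 * adam_m k) = lam * w k).
  { intros k. rewrite adam_mS. field. lra. }
  apply (Un_cv_ext _ _ _ Hgrad).
  replace 0 with (/ (1 - b1) * (0 - b1 * 0)) by ring.
  apply Un_cv_scal, CV_minus; [apply (Un_cv_succ_iff adam_m 0), Hm|].
  apply Un_cv_scal, Hm.
Qed.

End AdamOnQuadratic.

Theorem proposition3p3 (alpha b1 b2 eps lam w0 wstar : R) :
  0 < alpha -> 0 < b1 < 1 -> 0 < b2 < 1 -> 0 < eps -> 0 < lam ->
  Un_cv (adam_w alpha b1 b2 eps lam w0) wstar ->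
  wstar = 0.
Proof.
  intros Halpha Hb1 Hb2 Heps Hlam Hw.
  pose proof (adam_m_cv0 _ _ _ _ _ _ Halpha Hb1 Hb2 Heps wstar Hw) as Hm.
  pose proof (adam_grad_cv0 _ _ _ _ _ _ Hb1 Hm) as Hgrad.
  pose proof (UL_sequence _ _ _ (Un_cv_scal _ lam wstar Hw) Hgrad) as Hlim.
  destruct (Rmult_integral _ _ Hlim); lra.
Qed.
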